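(* $16\rightarrow 167\rightrightarrows 19$: there is an injective isotone map $\varphi:\mathbf 2^4\to F_4^-$ such that $\{\varphi(x)[p_1:=e]: x\in\mathbf 2^4,\ e\in\{0,1\}\}\supseteq F_3^-$.
   Context: $F_k$ is the set of monotone Boolean functions of $k$ variables $p_1,\dots,p_k$ (including constants $0,1$), ordered pointwise; $F_k^-=F_k\setminus\{0\}$. For $g\in F_k$ and $e\in\{0,1\}$, $g[p_1:=e]$ is the function of $p_2,\dots,p_k$ (identified with $F_{k-1}$) obtained by substituting $e$ for $p_1$. $\mathbf 2^i$ is $\{0,1\}^i$ with the coordinatewise order; isotone means order-preserving. Notation: $2^i\rightarrow|F_j^-|\rightrightarrows|F_{j-1}^-|$ means there is an injective isotone map $\varphi:\mathbf 2^i\to F_j^-$ such that every element of $F_{j-1}^-$ equals $\varphi(x)[p_1:=e]$ for some $x\in\mathbf 2^i$, $e\in\{0,1\}$. Here $|F_3^-|=19$, $|F_4^-|=167$. *)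

From mathcomp Require Import all_boot.
Set Implicit Arguments. Unset Strict Implicit. Unset Printing Implicit Defensive.

(* Points of the Boolean cube 2^k: assignments of truth values to p_1..p_k
   (index i : 'I_k stands for p_(i+1)). *)
Definition cube (k : nat) := {ffun 'I_k -> bool}.

Definition cube_le (k : nat) (a b : cube k) : Prop := forall i, a i <= b i.

Definition boolfun (k : nat) := {ffun cube k -> bool}.

Definition bf_le (k : nat) (f g : boolfun k) : Prop := forall a, f a <= g a.

Definition monotoneBF (k : nat) (f : boolfun k) : Prop :=
  forall a b : cube k, cube_le a b -> f a <= f b.

Definition inFminus (k : nat) (f : boolfun k) : Prop :=
  monotoneBF f /\ f <> [ffun _ => false].

(* g[p_1 := e] : substitute e for the first variable; the result is a
   function of p_2..p_(k+1), identified with a function of k variables. *)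
Definition subst1 (k : nat) (g : boolfun k.+1) (e : bool) : boolfun k :=
  [ffun a : cube k =>
     g [ffun i : 'I_k.+1 => if unlift ord0 i is Some j then a j else e]].

From mathcomp Require Import all_boot.
Set Implicit Arguments. Unset Strict Implicit. Unset Printing Implicit Defensive.

(* The map phi sends (t, u) in 2 x 2^3 to A_u || p_1 && B_u, a function of p_1
   and v = (p_2, p_3, p_4), so that phi(t, u)[p_1:=0] = A_u and
   phi(t, u)[p_1:=1] = A_u || B_u, where
   - for t = 0, A_u = OR_{i in u} v_j v_k ({i,j,k} = {0,1,2}) and
     B_u = AND_i (u_i || v_i);
   - for t = 1, A_u = OR_{i in u} (v_i || v_j v_k) and B_u = 1.
   Everything is monotone in u, and A_u for t = 0 lies below A_u for t = 1, so
   phi is isotone. Substituting p_1 := 0 yields the products v_j v_k, the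
   functions v_i (v_j || v_k) and the majority (t = 0), and v_i || v_j v_k,
   v_i || v_j and v_0 || v_1 || v_2 (t = 1); substituting p_1 := 1 yields in
   addition v_0 v_1 v_2, the three variables and the constant 1. These are all
   19 members of F_3^-. *)

Section BoolQuantifiers.
Variable P : pred bool.

Definition forall_bool := P false && P true.
Definition exists_bool := P false || P true.

Lemma forall_boolP : reflect (forall b, P b) forall_bool.
Proof. by apply: (iffP andP) => [[? ?] [] | Pb]. Qed.

Lemma exists_boolP : reflect (exists b, P b) exists_bool.
Proof. by apply: (iffP orP) => [[] ?|[[] ?]]; [exists false|exists true|right|left]. Qed.

End BoolQuantifiers.

Section CubeCoordinates.
Variable k : nat.

Definition cube_of (s : seq bool) : cube k := [ffun i : 'I_k => nth false s i].

Definition bit (a : cube k) (n : nat) : bool := oapp a false (insub n).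

Lemma bit_cube_of s n : size s = k -> bit (cube_of s) n = nth false s n.
Proof.
move=> sz_s; rewrite /bit; case: insubP => [i _ <- | ].
  by rewrite /= ffunE.
by rewrite -leqNgt -{1}sz_s => /(nth_default false) ->.
Qed.

Lemma cube_of_bits (a : cube k) : a = cube_of [seq bit a n | n <- iota 0 k].
Proof.
apply/ffunP => i; rewrite ffunE (nth_map 0) ?size_iota // nth_iota //.
by rewrite add0n /bit valK.
Qed.

Lemma cube_le_bit (a b : cube k) : cube_le a b -> forall n, bit a n <= bit b n.
Proof. by move=> le_ab n; rewrite /bit; case: insub. Qed.

Lemma cube_le_cube_of (s t : seq bool) :
  (forall n, nth false s n <= nth false t n) -> cube_le (cube_of s) (cube_of t).
Proof. by move=> le_st i; rewrite !ffunE. Qed.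

End CubeCoordinates.

Arguments cube_of {k} s.

Lemma subst1_cube_of (k : nat) (g : boolfun k.+1) e s :
  subst1 g e (cube_of s) = g (cube_of (e :: s)).
Proof.
rewrite ffunE; congr (g _); apply/ffunP => i; rewrite !ffunE.
by case: unliftP => [j -> | ->]; rewrite ?ffunE.
Qed.

Definition lower_part (t u0 u1 u2 v0 v1 v2 : bool) : bool :=
  if t then u0 && (v0 || v1 && v2) || u1 && (v1 || v0 && v2) || u2 && (v2 || v0 && v1)
  else u0 && v1 && v2 || u1 && v0 && v2 || u2 && v0 && v1.

Definition upper_part (t u0 u1 u2 v0 v1 v2 : bool) : bool :=
  t || (u0 || v0) && (u1 || v1) && (u2 || v2).

Definition Phi (t u0 u1 u2 p v0 v1 v2 : bool) : bool :=
  lower_part t u0 u1 u2 v0 v1 v2 || p && upper_part t u0 u1 u2 v0 v1 v2.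

Lemma Phi_top t u0 u1 u2 : Phi t u0 u1 u2 true true true true.
Proof. by rewrite /Phi /upper_part !orbT. Qed.

Lemma Phi_monotone (t u0 u1 u2 p v0 v1 v2 p' v0' v1' v2' : bool) :
  p <= p' -> v0 <= v0' -> v1 <= v1' -> v2 <= v2' ->
  Phi t u0 u1 u2 p v0 v1 v2 <= Phi t u0 u1 u2 p' v0' v1' v2'.
Proof.
by case: t; case: u0; case: u1; case: u2; case: p; case: p'; case: v0; case: v0';
  case: v1; case: v1'; case: v2; case: v2'.
Qed.

Lemma Phi_isotone (t u0 u1 u2 t' u0' u1' u2' p v0 v1 v2 : bool) :
  t <= t' -> u0 <= u0' -> u1 <= u1' -> u2 <= u2' ->
  Phi t u0 u1 u2 p v0 v1 v2 <= Phi t' u0' u1' u2' p v0 v1 v2.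
Proof.
by case: t; case: u0; case: u1; case: u2; case: t'; case: u0'; case: u1'; case: u2';
  case: p; case: v0; case: v1; case: v2.
Qed.

Lemma Phi_inj (t u0 u1 u2 t' u0' u1' u2' : bool) :
  (forall p v0 v1 v2, Phi t u0 u1 u2 p v0 v1 v2 = Phi t' u0' u1' u2' p v0 v1 v2) ->
  (t, u0, u1, u2) = (t', u0', u1', u2').
Proof.
move=> eq_Phi.
suff: forall_bool (fun p => forall_bool (fun v0 => forall_bool (fun v1 =>
        forall_bool (fun v2 =>
          Phi t u0 u1 u2 p v0 v1 v2 == Phi t' u0' u1' u2' p v0 v1 v2)))).
  clear eq_Phi.
  by case: t; case: u0; case: u1; case: u2; case: t'; case: u0'; case: u1'; case: u2'.
by do 4!apply/forall_boolP => ?; rewrite eq_Phi.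
Qed.

Lemma Phi_cover (h : bool -> bool -> bool -> bool) :
  (forall a0 a1 a2 b0 b1 b2 : bool, a0 <= b0 -> a1 <= b1 -> a2 <= b2 ->
     h a0 a1 a2 <= h b0 b1 b2) ->
  (exists a0 a1 a2, h a0 a1 a2) ->
  exists t u0 u1 u2 e, forall v0 v1 v2, Phi t u0 u1 u2 e v0 v1 v2 = h v0 v1 v2.
Proof.
move=> mono_h [a0 [a1 [a2 h_a]]].
(* Monotonicity along the twelve edges of 2^3, in a form the case analysis
   below can evaluate. *)
have h_edges : [&& h false false false <= h true false false,
    h false false false <= h false true false, h false false false <= h false false true,
    h true false false <= h true true false, h true false false <= h true false true,
    h false true false <= h true true false, h false true false <= h false true true,
    h false false true <= h true false true, h false false true <= h false true true,
    h true true false <= h true true true, h true false true <= h true true true &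
    h false true true <= h true true true] by rewrite !mono_h.
have h_nz : [|| h false false false, h true false false, h false true false,
    h false false true, h true true false, h true false true, h false true true
    | h true true true] by move: h_a; case: a0; case: a1; case: a2 => ->; rewrite ?orbT.
suff: exists_bool (fun t => exists_bool (fun u0 => exists_bool (fun u1 =>
        exists_bool (fun u2 => exists_bool (fun e => forall_bool (fun v0 =>
        forall_bool (fun v1 => forall_bool (fun v2 =>
          Phi t u0 u1 u2 e v0 v1 v2 == h v0 v1 v2)))))))).
  move=> /exists_boolP[t /exists_boolP[u0 /exists_boolP[u1 /exists_boolP[u2
          /exists_boolP[e /forall_boolP Phi_h]]]]].
  exists t, u0, u1, u2, e => v0 v1 v2.
  by move: (Phi_h v0) => /forall_boolP/(_ v1)/forall_boolP/(_ v2)/eqP.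
move: h_edges h_nz; rewrite /exists_bool /forall_bool.
move: (h false false false) (h true false false) (h false true false) (h false false true)
  (h true true false) (h true false true) (h false true true) (h true true true).
by do 8!case.
Qed.

Definition phi (w : cube 4) : boolfun 4 :=
  [ffun a => Phi (bit w 0) (bit w 1) (bit w 2) (bit w 3)
                 (bit a 0) (bit a 1) (bit a 2) (bit a 3)].

Lemma phi_cube_of (w : cube 4) p v0 v1 v2 :
  phi w (cube_of [:: p; v0; v1; v2]) =
  Phi (bit w 0) (bit w 1) (bit w 2) (bit w 3) p v0 v1 v2.
Proof. by rewrite ffunE !bit_cube_of. Qed.

Lemma phi_inj : injective phi.
Proof.
move=> w w' /ffunP eq_phi; rewrite (cube_of_bits w) (cube_of_bits w') /=.
suff [-> -> -> ->] :
  (bit w 0, bit w 1, bit w 2, bit w 3) = (bit w' 0, bit w' 1, bit w' 2, bit w' 3) by [].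
by apply: Phi_inj => p v0 v1 v2; rewrite -!phi_cube_of eq_phi.
Qed.

Lemma phi_in_Fminus (w : cube 4) : inFminus (phi w).
Proof.
split=> [a b le_ab | /ffunP/(_ (cube_of [:: true; true; true; true]))].
  by rewrite !ffunE Phi_monotone ?cube_le_bit.
by rewrite phi_cube_of Phi_top ffunE.
Qed.

Lemma phi_isotone (w w' : cube 4) : cube_le w w' -> bf_le (phi w) (phi w').
Proof. by move=> le_ww' a; rewrite !ffunE Phi_isotone ?cube_le_bit. Qed.

Lemma phi_subst1_cover (h : boolfun 3) :
  inFminus h -> exists w e, subst1 (phi w) e = h.
Proof.
move=> [mono_h nz_h].
pose h3 v0 v1 v2 := h (cube_of [:: v0; v1; v2]).
have mono_h3 (a0 a1 a2 b0 b1 b2 : bool) :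
    a0 <= b0 -> a1 <= b1 -> a2 <= b2 -> h3 a0 a1 a2 <= h3 b0 b1 b2.
  by move=> *; apply/mono_h/cube_le_cube_of => -[|[|[|n]]].
have nz_h3 : exists a0 a1 a2, h3 a0 a1 a2.
  have /existsP[a h_a] : [exists a, h a].
    apply: contra_notT nz_h => /existsPn h0.
    by apply/ffunP => a; rewrite ffunE; apply/negbTE/h0.
  by exists (bit a 0), (bit a 1), (bit a 2); rewrite /h3 [a in h a]cube_of_bits in h_a.
have [t [u0 [u1 [u2 [e Phi_h]]]]] := Phi_cover mono_h3 nz_h3.
exists (cube_of [:: t; u0; u1; u2]), e; apply/ffunP => a.
rewrite (cube_of_bits a) subst1_cube_of phi_cube_of !bit_cube_of //; exact: Phi_h.
Qed.

Theorem mainTheorem6 :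
  exists phi : cube 4 -> boolfun 4,
    [/\ injective phi,
        (forall x, inFminus (phi x)),
        (forall x y, cube_le x y -> bf_le (phi x) (phi y)) &
        (forall h : boolfun 3, inFminus h ->
           exists x : cube 4, exists e : bool, subst1 (phi x) e = h)].
Proof.
exists phi; split.
- exact: phi_inj.
- exact: phi_in_Fminus.
- exact: phi_isotone.
- exact: phi_subst1_cover.
Qed.
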